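(* For every positive integer $k$, as formal power series in $q$, $$\sum_{n\ge1}\mathrm{spt}k'_{do}(n)\,q^n=T_k(q)\,(q;q^2)_\infty+2q^k(q^2;q^2)_{k-1},$$ where $T_1(q)=-q$ and $T_k(q)=(q-q^{2k-1})T_{k-1}(q)-q^{2k-1}$ for $k>1$.
   Context: For a partition $\pi$, $s(\pi)$ is its smallest part. $\mathrm{Spt}k_{do}(n)$ is the set of partitions $\pi$ of $n$ in which $s(\pi)$ occurs exactly $k$ times and the remaining parts (those larger than $s(\pi)$) are pairwise distinct and each has parity different from that of $s(\pi)$. $B_0(k,n)$ (resp. $B_1(k,n)$) is the number of $\pi\in\mathrm{Spt}k_{do}(n)$ whose number of parts greater than $s(\pi)$ is even (resp. odd), and $\mathrm{spt}k'_{do}(n)=B_0(k,n)-B_1(k,n)$. Notation: $(a;q)_0=1$, $(a;q)_n=\prod_{j=0}^{n-1}(1-aq^j)$, $(a;q)_\infty=\prod_{j\ge0}(1-aq^j)$. *)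

From mathcomp Require Import all_boot all_order all_algebra.
Set Implicit Arguments. Unset Strict Implicit. Unset Printing Implicit Defensive.
Import GRing.Theory Num.Theory.
Local Open Scope ring_scope.

(* A partition of n is encoded by its multiplicity function:
   m i = number of times the part i occurs (1 <= i <= n).
   Each multiplicity is at most n, so m : {ffun 'I_n.+1 -> 'I_n.+1}. *)
Definition mults (n : nat) := {ffun 'I_n.+1 -> 'I_n.+1}.

Definition is_partition (n : nat) (m : mults n) : bool :=
  (nat_of_ord (m ord0) == 0)%N && (\sum_(i < n.+1) (i * m i)%N == n)%N.

Definition spt_do_at (k n : nat) (m : mults n) (s : 'I_n.+1) : bool :=
  [&& (0 < s)%N, (m s == k :> nat),
      [forall i : 'I_n.+1, (i < s)%N ==> (m i == 0 :> nat)] &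
      [forall i : 'I_n.+1, (s < i)%N ==>
          ((m i <= 1)%N && ((m i == 1 :> nat) ==> (odd i != odd s)))]].

Definition nlarger (n : nat) (m : mults n) (s : 'I_n.+1) : nat :=
  (\sum_(i < n.+1 | (s < i)%N) m i)%N.

Definition B0 (k n : nat) : nat :=
  #|[set m : mults n | is_partition m &&
      [exists s, spt_do_at k m s && ~~ odd (nlarger m s)]]|.
Definition B1 (k n : nat) : nat :=
  #|[set m : mults n | is_partition m &&
      [exists s, spt_do_at k m s && odd (nlarger m s)]]|.

Definition sptkdo' (k n : nat) : int := (B0 k n)%:Z - (B1 k n)%:Z.

(* T_1 = -q, T_k = (q - q^(2k-1)) T_(k-1) - q^(2k-1); T_0 is unused. *)
Fixpoint Tpoly (k : nat) : {poly int} :=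
  match k with
  | 0 => 0
  | 1 => - 'X
  | (j.+1) as k' => ('X - 'X^(2 * k' - 1)) * Tpoly j - 'X^(2 * k' - 1)
  end.

Definition poch_q_q2 (N : nat) : {poly int} := \prod_(j < N) (1 - 'X^(2 * j + 1)).
Definition poch_q2_q2 (N : nat) : {poly int} := \prod_(j < N) (1 - 'X^(2 * j + 2)).

(* Grouping the partitions by their smallest part s, the signed count factors over
   the parts: s contributes q^(k s), every part i > s of the other parity contributes
   1 - q^i, and no other part may occur.  Hence
     sum_n spt k'_do(n) q^n = S_k := sum_(s >= 1) q^(k s) (q^(s+1); q^2)_oo.
   Splitting off the first factor 1 - q^(s+1) of (q^(s+1); q^2)_oo and shifting s
   by 2 telescopes S_1 = 2q - q (q; q^2)_oo and gives
     S_(k+1) = (q - q^(2k+1)) S_k - q^(2k+1) (q; q^2)_oo,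
   which is the recurrence of T_k once (q^2; q^2)_k = (1 - q^(2k)) (q^2; q^2)_(k-1)
   is taken into account.  All identities are proved between polynomials modulo
   q^N, with the infinite products truncated at degree N. *)

From mathcomp Require Import all_boot all_order all_algebra.
From mathcomp Require Import ring zify.
From Stdlib Require Import Setoid Morphisms.
Set Implicit Arguments. Unset Strict Implicit. Unset Printing Implicit Defensive.
Import GRing.Theory.
Local Open Scope ring_scope.

Section TruncatedEquality.
Variable R : nzRingType.
Implicit Types (N : nat) (p q r : {poly R}).

Record trunc_eq N p q : Prop :=
  TruncEq { trunc_eqP : forall i, (i < N)%N -> p`_i = q`_i }.

Lemma eq_trunc_eq N p q : p = q -> trunc_eq N p q. Proof. by move->. Qed.

Lemma trunc_eq_sym N p q : trunc_eq N p q -> trunc_eq N q p.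
Proof. by case=> h; split=> i /h. Qed.

Lemma trunc_eq_trans N p q r : trunc_eq N p q -> trunc_eq N q r -> trunc_eq N p r.
Proof. by case=> h1 [h2]; split=> i hi; rewrite h1 // h2. Qed.

Lemma trunc_eqD N p p' q q' :
  trunc_eq N p p' -> trunc_eq N q q' -> trunc_eq N (p + q) (p' + q').
Proof. by case=> h1 [h2]; split=> i hi; rewrite !coefD h1 // h2. Qed.

Lemma trunc_eqN N p p' : trunc_eq N p p' -> trunc_eq N (- p) (- p').
Proof. by case=> h; split=> i hi; rewrite !coefN h. Qed.

Lemma trunc_eqMr N p p' r : trunc_eq N p p' -> trunc_eq N (p * r) (p' * r).
Proof.
case=> h; split=> i hi; rewrite !coefM; apply: eq_bigr => j _.
by rewrite h // (leq_ltn_trans _ hi) // -ltnS.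
Qed.

Lemma trunc_eqMl N p p' r : trunc_eq N p p' -> trunc_eq N (r * p) (r * p').
Proof.
case=> h; split=> i hi; rewrite !coefM; apply: eq_bigr => j _.
by rewrite h // (leq_ltn_trans _ hi) // leq_subr.
Qed.

Lemma trunc_eq_mulXn0 N e r : (N <= e)%N -> trunc_eq N ('X^e * r) 0.
Proof. by move=> le_Ne; split=> i lt_iN; rewrite coefXnM coef0 ifT //; lia. Qed.

End TruncatedEquality.

#[export] Instance trunc_eq_Equivalence (R : nzRingType) N :
  Equivalence (@trunc_eq R N).
Proof.
by split=> [p|p q|p q r]; [apply: eq_trunc_eq | apply: trunc_eq_sym | apply: trunc_eq_trans].
Qed.

#[export] Instance trunc_eq_add (R : nzRingType) N :
  Proper (@trunc_eq R N ==> @trunc_eq R N ==> @trunc_eq R N) +%R.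
Proof. by move=> p p' hp q q' hq; apply: trunc_eqD. Qed.

#[export] Instance trunc_eq_opp (R : nzRingType) N :
  Proper (@trunc_eq R N ==> @trunc_eq R N) -%R.
Proof. by move=> p p'; apply: trunc_eqN. Qed.

#[export] Instance trunc_eq_mul (R : nzRingType) N :
  Proper (@trunc_eq R N ==> @trunc_eq R N ==> @trunc_eq R N) *%R.
Proof.
by move=> p p' hp q q' hq; apply: trunc_eq_trans (trunc_eqMr _ hp) (trunc_eqMl _ hq).
Qed.

Section TruncatedPochhammer.
Context {R : comNzRingType}.
Implicit Types (N k M t L : nat).

(* [(q^t; q^2)_oo] with the factors of degree [>= L] dropped. *)
Definition poch2 t L : {poly R} :=
  \prod_(i < L | (t <= i)%N && (odd i == odd t)) (1 - 'X^i).

Lemma poch2_ge t L : (L <= t)%N -> poch2 t L = 1.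
Proof. by move=> le_Lt; apply: big_pred0 => i; rewrite leqNgt (leq_trans (ltn_ord i)). Qed.

Lemma poch2_rec t L : (t < L)%N -> poch2 t L = (1 - 'X^t) * poch2 t.+2 L.
Proof.
move=> lt_tL; rewrite /poch2 (bigD1 (Ordinal lt_tL)) ?leqnn ?eqxx //=; congr (_ * _).
apply: eq_bigl => i; rewrite /= negbK -val_eqE /=.
have [le_it|lt_ti] := leqP i t.+1; last first.
  by rewrite (ltnW (ltnW lt_ti)) (gtn_eqF (ltnW lt_ti)) andbT.
rewrite /=; case: (ltngtP i t) => [//|gt_it|->]; last by rewrite andbF.
have -> : nat_of_ord i = t.+1 by lia.
by rewrite /= andbT; case: odd.
Qed.

Lemma poch2_rec_trunc N t : trunc_eq N (poch2 t N) ((1 - 'X^t) * poch2 t.+2 N).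
Proof.
have [lt_tN|le_Nt] := ltnP t N; first by rewrite poch2_rec.
have le_Nt2 : (N <= t.+2)%N by lia.
by rewrite !poch2_ge // mulr1 -[_ ^+ _]mulr1 trunc_eq_mulXn0 // subr0.
Qed.

Lemma poch2S t L :
  poch2 t L.+1 = poch2 t L * (if (t <= L)%N && (odd L == odd t) then 1 - 'X^L else 1).
Proof. by rewrite /poch2 !(big_mkcond (fun i : 'I__ => _ && _)) big_ord_recr. Qed.

Lemma poch2_trunc N t L : (N <= L)%N -> trunc_eq N (poch2 t L) (poch2 t N).
Proof.
move=> le_NL; rewrite -(subnKC le_NL); elim: (L - N)%N => [|d IH]; first by rewrite addn0.
rewrite addnS poch2S IH; case: ifP => _; last by rewrite mulr1.
by rewrite -[_ ^+ _]mulr1 trunc_eq_mulXn0 ?leq_addr // subr0 mulr1.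
Qed.

Lemma poch2_0 L : (0 < L)%N -> poch2 0 L = 0.
Proof. by case: L => // L _; rewrite poch2_rec // expr0 subrr mul0r. Qed.

(* [sum_(1 <= s <= M) q^(k s) (q^(s+1); q^2)_oo], products truncated at degree [N];
   for [k > 0] and [M >= N - 1] it is the generating function of [sptkdo' k] modulo [q^N]. *)
Definition sptgf N k M : {poly R} := \sum_(s < M) 'X^(k * s.+1) * poch2 s.+2 N.

Lemma sptgfS N k M : sptgf N k M.+1 = sptgf N k M + 'X^(k * M.+1) * poch2 M.+2 N.
Proof. by rewrite /sptgf big_ord_recr. Qed.

Lemma sptgf_stable N k M M' : (0 < k)%N -> (M <= M')%N -> (N <= M.+1)%N ->
  trunc_eq N (sptgf N k M') (sptgf N k M).
Proof.
move=> k_gt0 le_MM' le_NM; rewrite -(subnKC le_MM'); elim: (M' - M)%N => [|d IH].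
  by rewrite addn0.
by rewrite addnS sptgfS IH trunc_eq_mulXn0 ?addr0 //; nia.
Qed.

Lemma sptgf_vanish N k M : (N <= k)%N -> trunc_eq N (sptgf N k M) 0.
Proof.
move=> le_Nk; elim: M => [|M IH]; first by rewrite /sptgf big_ord0.
by rewrite sptgfS IH trunc_eq_mulXn0 ?addr0 //; nia.
Qed.

Lemma sptgf1 N M : (0 < N)%N ->
  trunc_eq N (sptgf N 1 M) ('X * (poch2 M.+1 N + poch2 M N - poch2 1 N)).
Proof.
move=> N_gt0; elim: M => [|M IH].
  by rewrite /sptgf big_ord0 poch2_0 // addr0 subrr mulr0.
rewrite sptgfS IH (poch2_rec_trunc N M) mul1n exprS; apply: eq_trunc_eq; ring.
Qed.

Lemma sptgf_rec N k P : trunc_eq N (sptgf N k.+1 P.+2)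
  ('X * sptgf N k P.+2 - 'X^(2 * k + 1) * sptgf N k P - 'X^(2 * k + 1) * poch2 1 N).
Proof.
elim: P => [|P IH].
  rewrite /sptgf !big_ord_recr !big_ord0 /= (poch2_rec_trunc N 1); apply: eq_trunc_eq.
  rewrite !(mulSn, mulnS, muln0, mul0n, addn0, add0n, exprD, exprS, expr0); ring.
rewrite sptgfS IH !sptgfS (poch2_rec_trunc N P.+2); apply: eq_trunc_eq.
rewrite !(mulSn, mulnS, muln0, mul0n, addn0, add0n, exprD, exprS, expr0); ring.
Qed.

End TruncatedPochhammer.

Lemma poch_q_q2E M : poch_q_q2 M = poch2 1 (2 * M).
Proof.
elim: M => [|M IH]; first by rewrite /poch_q_q2 big_ord0 poch2_ge.
rewrite /poch_q_q2 big_ord_recr /= -/(poch_q_q2 M) IH mulnS !addSn add0n !poch2S.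
by rewrite mul2n /= odd_double andbF mulr1 addn1.
Qed.

Lemma sptgf_closed_form N k : (0 < N)%N ->
  trunc_eq N (sptgf N k.+1 N) (Tpoly k.+1 * poch2 1 N + 2%:P * 'X^(k.+1) * poch_q2_q2 k).
Proof.
move=> N_gt0; elim: k => [|k IH].
  rewrite sptgf1 // (poch2_ge (leqnSn N)) (poch2_ge (leqnn N)).
  by rewrite /poch_q2_q2 big_ord0 polyC_natr /=; apply: eq_trunc_eq; ring.
have le_NN2 : (N <= N.+2)%N by rewrite leqW.
rewrite -(sptgf_stable (M := N) (ltn0Sn _) le_NN2 (leqnSn N)) sptgf_rec.
rewrite (sptgf_stable (M := N) (ltn0Sn _) le_NN2 (leqnSn N)) IH.
rewrite /poch_q2_q2 big_ord_recr /= -/(poch_q2_q2 k).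
have -> : (2 * k.+2 - 1 = 2 * k.+1 + 1)%N by lia.
apply: eq_trunc_eq.
rewrite !(mulSn, mulnS, muln0, mul0n, addn0, add0n, exprD, exprS, expr0); ring.
Qed.

Lemma natr_card_set (R : nzRingType) (T : finType) (P : pred T) :
  #|[set x | P x]|%:R = \sum_x (P x)%:R :> R.
Proof.
rewrite -sum1_card natr_sum big_mkcond /=.
by apply: eq_bigr => x _; rewrite inE; case: (P x).
Qed.

Lemma natr_exists_uniq (R : nzRingType) (I : finType) (P : pred I) :
  (forall i j, P i -> P j -> i = j) -> [exists i, P i]%:R = \sum_i (P i)%:R :> R.
Proof.
move=> uniqP; case: existsP => [[i Pi]|noP].
  rewrite (bigD1 i) //= Pi big1 ?addr0 // => j neq_ji.
  by case: (boolP (P j)) => // Pj; rewrite (uniqP _ _ Pj Pi) eqxx in neq_ji.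
by rewrite big1 // => i _; case: (boolP (P i)) => // Pi; case: noP; exists i.
Qed.

Lemma spt_do_at_uniq k n (m : mults n) (s s' : 'I_n.+1) : (0 < k)%N ->
  spt_do_at k m s -> spt_do_at k m s' -> s = s'.
Proof.
move=> k_gt0 /and4P[_ /eqP ms /forallP below _] /and4P[_ /eqP ms' /forallP below' _].
case: (ltngtP s s') => [lt_ss'|lt_s's|/val_inj //].
- by move: (below' s); rewrite lt_ss' ms /= => /eqP k0; rewrite k0 in k_gt0.
- by move: (below s'); rewrite lt_s's ms' /= => /eqP k0; rewrite k0 in k_gt0.
Qed.

Lemma sptkdo'_signed_sum k n : (0 < k)%N -> sptkdo' k n =
  \sum_(m : mults n) \sum_(s < n.+1)
     (is_partition m && spt_do_at k m s)%:R * (-1) ^+ nlarger m s.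
Proof.
move=> k_gt0; rewrite /sptkdo' /B0 /B1 -!natz !natr_card_set -sumrB.
apply: eq_bigr => m _; case: (is_partition m) => /=; last first.
  by rewrite subrr big1 // => s _; rewrite mul0r.
have uniq_spt Q s s' : spt_do_at k m s && Q s -> spt_do_at k m s' && Q s' -> s = s'.
  by move=> /andP[spt_s _] /andP[spt_s' _]; apply: spt_do_at_uniq spt_s spt_s'.
rewrite !natr_exists_uniq; [|exact: uniq_spt..]; rewrite -sumrB; apply: eq_bigr => s _.
by case: (spt_do_at k m s); rewrite -signr_odd; case: odd.
Qed.

Definition admissible (k s i j : nat) : bool :=
  if (i < s)%N then j == 0%N
  else if i == s then (j == k) && (0 < s)%N
  else (j <= 1)%N && ((j == 1%N) ==> (odd i != odd s)).

(* The signed monomial contributed by the part [i] occurring [j] times in a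
   partition with smallest part [s]; the sign records the parts larger than [s].
   Summing its product over all multiplicity functions factors the signed count. *)
Definition spt_weight (k s i j : nat) : {poly int} :=
  if admissible k s i j then (-1) ^+ ((s < i)%N * j) * 'X^(i * j) else 0.

Lemma admissibleP k n (m : mults n) (s : 'I_n.+1) :
  (nat_of_ord (m ord0) == 0%N) && spt_do_at k m s = [forall i : 'I_n.+1, admissible k s i (m i)].
Proof.
rewrite /admissible; apply/andP/forallP => [|adm].
  move=> [_ /and4P[s_gt0 /eqP ms /forallP below /forallP above]] i.
  case: (ltngtP i s) => [lt_is|lt_si|/val_inj ->]; last by rewrite ms eqxx.
    by have := below i; rewrite lt_is.
  by have := above i; rewrite lt_si.
have := adm s; rewrite ltnn eqxx => /andP[/eqP ms s_gt0].
split; first by have := adm ord0; rewrite /= s_gt0.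
apply/and4P; split; rewrite ?ms //; apply/forallP => i; apply/implyP => lt.
  by have := adm i; rewrite lt.
by have := adm i; rewrite ltnNge (ltnW lt) (gtn_eqF lt).
Qed.

Lemma prod_spt_weight k n (m : mults n) (s : 'I_n.+1) :
  \prod_(i < n.+1) spt_weight k s i (m i) =
  if [forall i : 'I_n.+1, admissible k s i (m i)]
  then (-1) ^+ nlarger m s * 'X^(\sum_(i < n.+1) i * m i) else 0.
Proof.
case: ifP => [/forallP adm|/negbT/forallPn[i not_adm]]; last first.
  by rewrite (bigD1 i) //= /spt_weight (negbTE not_adm) mul0r.
rewrite (eq_bigr (fun i : 'I_n.+1 => (-1) ^+ ((s < i)%N * m i) * 'X^(i * m i))); last first.
  by move=> i _; rewrite /spt_weight adm.
rewrite big_split /= !prodrXr /nlarger [in RHS]big_mkcond /=.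
by congr (_ ^+ _ * _); apply: eq_bigr => i _; case: (s < i)%N; rewrite ?mul1n.
Qed.

Lemma coef_prod_spt_weight k n (m : mults n) (s : 'I_n.+1) :
  (is_partition m && spt_do_at k m s)%:R * (-1) ^+ nlarger m s =
  (\prod_(i < n.+1) spt_weight k s i (m i))`_n.
Proof.
rewrite prod_spt_weight -admissibleP /is_partition -andbA andbCA.
case: (_ && spt_do_at _ _ _); last by rewrite andbF mul0r coef0.
by rewrite andbT -(rmorph_sign polyC) coefCM coefXn eq_sym mulrC.
Qed.

Lemma sum_spt_weight_lt k n (s i : 'I_n.+1) : (i < s)%N ->
  \sum_(j < n.+1) spt_weight k s i j = 1.
Proof.
move=> lt_is; rewrite big_ord_recl big1 ?addr0 => [|j _].
  by rewrite /spt_weight /admissible lt_is /= !muln0 expr0 mulr1.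
by rewrite /spt_weight /admissible lt_is.
Qed.

Lemma sum_spt_weight_gt k n (s i : 'I_n.+1) : (s < i)%N ->
  \sum_(j < n.+1) spt_weight k s i j = if odd i != odd s then 1 - 'X^i else 1.
Proof.
case: n s i => [|n] s i lt_si; first by rewrite (ord1 s) (ord1 i) in lt_si.
have adm j : admissible k s i j = (j <= 1)%N && ((j == 1%N) ==> (odd i != odd s)).
  by rewrite /admissible ltnNge (ltnW lt_si) (gtn_eqF lt_si).
rewrite !big_ord_recl big1 ?addr0 => [|j _]; last by rewrite /spt_weight adm.
rewrite /spt_weight !adm lift0 lt_si /= !muln0 !muln1 expr0 expr1 mul1r mulN1r.
by case: (odd i != odd s); rewrite ?addr0.
Qed.

Lemma sum_spt_weight_eq k n (s : 'I_n.+1) :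
  \sum_(j < n.+1) spt_weight k s s j = ((0 < s)%N && (k < n.+1)%N)%:R * 'X^(s * k).
Proof.
under eq_bigr do rewrite /spt_weight /admissible ltnn eqxx /= mul1r.
case: (ltnP k n.+1) => [lt_kn|le_nk]; last first.
  rewrite andbF mul0r big1 // => j _; case: eqP => // eq_jk.
  by move: (ltn_ord j); rewrite eq_jk ltnNge le_nk.
rewrite (bigD1 (Ordinal lt_kn)) //= eqxx big1 ?addr0 => [|j neq_jk].
  by case: (0 < s)%N; rewrite ?mul1r ?mul0r.
by rewrite -val_eqE /= in neq_jk; rewrite (negbTE neq_jk).
Qed.

Lemma prod_sum_spt_weight k n (s : 'I_n.+1) :
  \prod_(i < n.+1) \sum_(j < n.+1) spt_weight k s i j =
  ((0 < s)%N && (k < n.+1)%N)%:R * 'X^(s * k) * poch2 s.+1 n.+1.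
Proof.
rewrite (bigD1 s) //= sum_spt_weight_eq; congr (_ * _).
rewrite /poch2 big_mkcond [RHS](big_mkcond (fun i : 'I__ => _ && _)) /=; apply: eq_bigr => i _.
rewrite -val_eqE /=; case: (ltngtP i s) => [lt_is|lt_si|_] //.
  by rewrite sum_spt_weight_lt.
by rewrite sum_spt_weight_gt //; case: (odd i); case: (odd s).
Qed.

Lemma sptkdo'_coef k n : (0 < k)%N -> sptkdo' k n = (sptgf n.+1 k n)`_n.
Proof.
move=> k_gt0; rewrite sptkdo'_signed_sum // exchange_big.
transitivity ((\sum_(s < n.+1)
  ((0 < s)%N && (k < n.+1)%N)%:R * 'X^(s * k) * poch2 s.+1 n.+1 : {poly int})`_n).
  rewrite coef_sum; apply: eq_bigr => s _.
  rewrite -prod_sum_spt_weight bigA_distr_bigA coef_sum.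
  by apply: eq_bigr => m _; rewrite coef_prod_spt_weight.
rewrite big_ord_recl /= !mul0r add0r.
case: (ltnP k n.+1) => [lt_kn|le_nk].
  by congr (_`_n); rewrite /sptgf; under eq_bigr => s _ do rewrite mul1r mulnC /bump leq0n add1n.
rewrite (trunc_eqP (sptgf_vanish _ le_nk) (ltnSn n)) coef0 big1 ?coef0 // => s _.
by rewrite !mul0r.
Qed.

Theorem theorem2 (k : nat) : (0 < k)%N ->
  forall n : nat,
    (if n == 0%N then 0 else sptkdo' k n) =
    (Tpoly k * poch_q_q2 n.+1)`_n + (2%:P * 'X^k * poch_q2_q2 k.-1)`_n.
Proof.
case: k => // k _ n; rewrite -coefD /=.
have gf : trunc_eq n.+1 (Tpoly k.+1 * poch_q_q2 n.+1 + 2%:P * 'X^(k.+1) * poch_q2_q2 k)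
                       (sptgf n.+1 k.+1 n).
  rewrite poch_q_q2E (poch2_trunc _ (leq_pmull _ (ltn0Sn 1))) -sptgf_closed_form //.
  exact: sptgf_stable.
rewrite (trunc_eqP gf (ltnSn n)).
by case: n {gf} => [|n]; rewrite ?sptkdo'_coef // /sptgf big_ord0 coef0.
Qed.
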